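(* Consider the linear time-invariant system $\dot x(t) = Ax(t) + Bu(t) + Ed(t)$, $z(t) = Hx(t)$ with $A\in\mathbb{R}^{n\times n}$, $B\in\mathbb{R}^{n\times m}$, $E\in\mathbb{R}^{n\times \ell}$, $H\in\mathbb{R}^{p\times n}$, under linear state feedback $u(t)=Fx(t)$ with $F\in\mathbb{R}^{m\times n}$. Let $g(t) = He^{(A+BF)t}E$ be the impulse response from $d$ to $z$ and define $\|g\|_{H_2}^2 = \int_0^\infty \mathrm{Tr}(g(\tau)^\top g(\tau))\,d\tau$. Then $\|g\|_{H_2}^2 = 0$ if and only if there exist an integer $k$ and matrices $X\in\mathbb{R}^{k\times k}$, $V\in\mathbb{R}^{n\times k}$ such that $$VX - BFV = AV, \qquad \operatorname{im} E \subseteq \operatorname{im} V \subseteq \ker H.$$ (No internal stability of $A+BF$ is assumed.)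
   Context: $\operatorname{im}$ and $\ker$ denote image and kernel of a matrix. The $H_2$ norm is defined by the (possibly infinite) integral above, without requiring $A+BF$ to be Hurwitz. *)

From HB Require Import structures.
From mathcomp Require Import all_boot all_order all_algebra.
From mathcomp Require Import all_classical all_reals all_analysis.
Set Implicit Arguments. Unset Strict Implicit. Unset Printing Implicit Defensive.
Import Order.TTheory GRing.Theory Num.Theory numFieldNormedType.Exports.
Local Open Scope ring_scope.
Local Open Scope classical_set_scope.

Definition expm (R : realType) (n : nat) (M : 'M[R]_n) : 'M[R]_n :=
  \matrix_(i, j) limn (series (fun k : nat => (k`!%:R)^-1 * (M ^+ k) i j)).

Definition impulse_resp (R : realType) (n m l p : nat)
  (A : 'M[R]_n) (B : 'M[R]_(n, m)) (E : 'M[R]_(n, l)) (H : 'M[R]_(p, n))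
  (F : 'M[R]_(m, n)) (t : R) : 'M[R]_(p, l) :=
  H *m expm (t *: (A + B *m F)) *m E.

(* Squared H2 norm: \int_0^oo Tr(g(t)^T g(t)) dt, as an extended real
   (possibly +oo; no stability assumed). *)
Definition H2norm2 (R : realType) (p l : nat) (g : R -> 'M[R]_(p, l)) : \bar R :=
  (\int[lebesgue_measure]_(t in `[0%R, +oo[) (\tr ((g t)^T *m g t))%:E)%E.

(** The squared H2 norm is the integral of the nonnegative function
   t |-> |H e^{tM} E|^2 with M = A + BF, so it vanishes iff H e^{tM} E = 0 at
   points t arbitrarily close to 0.  Each entry of H e^{tM} E is the exponential
   generating function of the corresponding entry of the Markov parameters
   H M^k E, whose coefficients grow at most geometrically; such a series vanishing
   at points accumulating at 0 has all its coefficients zero.  Finally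
   H M^k E = 0 for all k iff the Krylov space spanned by the columns of M^k E,
   which is M-invariant by Cayley-Hamilton, lies in ker H: this space is the
   required im V, with X the matrix of M restricted to it. *)

From HB Require Import structures.
From mathcomp Require Import all_boot all_order all_algebra.
From mathcomp Require Import all_classical all_reals all_analysis.
From mathcomp Require Import measurable_realfun.
From mathcomp Require Import lra.
Import Order.TTheory GRing.Theory Num.Theory numFieldNormedType.Exports.
Set Implicit Arguments.
Unset Strict Implicit.
Unset Printing Implicit Defensive.
Local Open Scope ring_scope.
Local Open Scope classical_set_scope.

Section Krylov.
Context {F : fieldType}.

Lemma mxpow_dim_span n (M : 'M[F]_n) :
  exists c : 'I_n -> F, M ^+ n = \sum_i c i *: M ^+ i.
Proof.
case: n M => [|n] M; first by exists (fun=> 0); rewrite big_ord0 flatmx0.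
have size_chM : size (char_poly M) = n.+2 := size_char_poly M.
have lead1 : (char_poly M)`_n.+1 = 1.
  by have /monicP := char_poly_monic M; rewrite lead_coefE size_chM.
have := Cayley_Hamilton M; rewrite /horner_mx /horner_morph horner_coef.
rewrite size_map_poly size_chM big_ord_recr /= coef_map /= lead1 mul1r.
move/eqP; rewrite addrC addr_eq0 => /eqP ->.
exists (fun i => - (char_poly M)`_i); rewrite -sumrN; apply: eq_bigr => i _.
by rewrite coef_map /= -mulmxE mul_scalar_mx scaleNr.
Qed.

(* The column span of E, ME, ..., M^(n-1)E, encoded as a row space of transposes. *)
Definition krylovmx n l (M : 'M[F]_n) (E : 'M[F]_(n, l)) : 'M[F]_n :=
  (\sum_(i < n) <<(M ^+ i *m E)^T>>)%MS.

Lemma sub_krylovmx n l (M : 'M[F]_n) (E : 'M[F]_(n, l)) i :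
  ((M ^+ i *m E)^T <= krylovmx M E)%MS.
Proof.
have [c Mn] := mxpow_dim_span M.
elim/ltn_ind: i => i IH; have [lt_in | le_ni] := ltnP i n.
  by apply: (sumsmx_sup (Ordinal lt_in)); rewrite ?genmxE.
rewrite -(subnK le_ni) exprD Mn mulr_sumr mulmx_suml raddf_sum /=.
apply: summx_sub => j _; rewrite -mulmxE -scalemxAr -scalemxAl linearZ /= scalemx_sub //.
by rewrite mulmxE -exprD IH // -[ltnRHS](subnK le_ni) ltn_add2l.
Qed.

Lemma krylovmx_stable n l (M : 'M[F]_n) (E : 'M[F]_(n, l)) :
  stablemx (krylovmx M E) M^T.
Proof.
rewrite sumsmxMr; apply/sumsmx_subP => i _.
rewrite (eqmxMr _ (genmxE _)) -trmx_mul mulmxA mulmxE -exprS; exact: sub_krylovmx.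
Qed.

Lemma krylovmx_ker n l p (M : 'M[F]_n) (E : 'M[F]_(n, l)) (H : 'M[F]_(p, n)) :
  (forall k, H *m M ^+ k *m E = 0) -> H *m (krylovmx M E)^T = 0.
Proof.
move=> HME; apply: trmx_inj; rewrite trmx_mul trmxK trmx0.
apply/sub_kermxP/sumsmx_subP => i _; rewrite genmxE.
by apply/sub_kermxP; rewrite -trmx_mul mulmxA HME trmx0.
Qed.

Lemma mulmx_exp_intertwine n k (M : 'M[F]_n) (X : 'M[F]_k) (V : 'M[F]_(n, k)) :
  M *m V = V *m X -> forall i, M ^+ i *m V = V *m X ^+ i.
Proof.
move=> MV; elim=> [|i IH]; first by rewrite !expr0 mul1mx mulmx1.
by rewrite !exprS -!mulmxE -mulmxA IH !mulmxA MV.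
Qed.

Lemma markov_eq0_invariant n l p
    (M : 'M[F]_n) (E : 'M[F]_(n, l)) (H : 'M[F]_(p, n)) :
  (forall k, H *m M ^+ k *m E = 0) <->
  exists k (X : 'M[F]_k) (V : 'M[F]_(n, k)),
    [/\ V *m X = M *m V, (E^T <= V^T)%MS & H *m V = 0].
Proof.
split=> [HME | [k [X [V [VX /submxP[D EV] HV]]]] i].
- have [X VX] := submxP (krylovmx_stable M E).
  exists n, X^T, (krylovmx M E)^T; split; last exact: krylovmx_ker.
  + by rewrite -trmx_mul -VX trmx_mul trmxK.
  + by have := sub_krylovmx M E 0; rewrite expr0 mul1mx trmxK.
- rewrite -[E]trmxK EV trmx_mul trmxK mulmxA -(mulmxA H).
  by rewrite (mulmx_exp_intertwine (esym VX)) mulmxA HV !mul0mx.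
Qed.

End Krylov.

Lemma mx_exprZn (R : comPzRingType) n (a : R) (M : 'M[R]_n) k :
  (a *: M) ^+ k = a ^+ k *: M ^+ k.
Proof.
elim: k => [|k IH]; first by rewrite !expr0 scale1r.
by rewrite !exprS IH -!mulmxE -scalemxAl -scalemxAr scalerA.
Qed.

Lemma norm_mxpow_entry_le (R : numDomainType) n (M : 'M[R]_n) k a b :
  `|(M ^+ k) a b| <= (\sum_i \sum_j `|M i j|) ^+ k.
Proof.
set c := \sum_i \sum_j `|M i j|.
have c0 : 0 <= c by rewrite !sumr_ge0 // => *; rewrite sumr_ge0.
elim: k a b => [|k IH] a b.
  by rewrite expr0 mxE; case: (a == b); rewrite ?normr1 ?normr0.
rewrite exprSr -mulmxE mxE exprSr; apply: le_trans (ler_norm_sum _ _ _) _.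
apply: (@le_trans _ _ (\sum_j c ^+ k * `|M j b|)).
  by apply: ler_sum => j _; rewrite normrM ler_wpM2r.
rewrite -mulr_sumr ler_wpM2l ?exprn_ge0 //; apply: ler_sum => j _.
by rewrite (bigD1 b) //= lerDl sumr_ge0.
Qed.

Lemma mxtrace_mulTmx (R : pzRingType) p l (G : 'M[R]_(p, l)) :
  \tr (G^T *m G) = \sum_i \sum_j G j i ^+ 2.
Proof.
by apply: eq_bigr => i _; rewrite mxE; apply: eq_bigr => j _; rewrite mxE expr2.
Qed.

Lemma mxtrace_mulTmx_ge0 (R : realDomainType) p l (G : 'M[R]_(p, l)) :
  0 <= \tr (G^T *m G).
Proof.
by rewrite mxtrace_mulTmx !sumr_ge0 // => i _; rewrite sumr_ge0 // => j _; rewrite sqr_ge0.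
Qed.

Lemma mxtrace_mulTmx_eq0 (R : realDomainType) p l (G : 'M[R]_(p, l)) :
  (\tr (G^T *m G) == 0) = (G == 0).
Proof.
apply/idP/eqP => [|->]; last by rewrite mulmx0 mxtrace0.
have sqr_sum_ge0 i : 0 <= \sum_j G j i ^+ 2 by rewrite sumr_ge0 // => j _; rewrite sqr_ge0.
rewrite mxtrace_mulTmx => /eqP/(psumr_eq0P (fun i _ => sqr_sum_ge0 i)) col0.
apply/matrixP => j i; apply/eqP; rewrite mxE -sqrf_eq0; apply/eqP.
by apply: (psumr_eq0P _ (col0 i isT)) => // k _; rewrite sqr_ge0.
Qed.

Section ExponentialGeneratingFunction.
Context {R : realType}.
Implicit Types (x : nat -> R) (t : R).

Definition egf_coeff x t : R^nat := fun k => exp_coeff t k * x k.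

Definition egf x t : R := limn (series (egf_coeff x t)).

Definition geom_bounded x :=
  exists C c : R, [/\ 0 <= C, 0 <= c & forall k, `|x k| <= C * c ^+ k].

Lemma norm_egf_coeff_le x t C c k : `|x k| <= C * c ^+ k ->
  `|egf_coeff x t k| <= `|t| ^+ k * (C * exp_coeff c k).
Proof.
move=> xk; rewrite /egf_coeff /exp_coeff /= normrM normrM normrX normfV.
rewrite normr_nat mulrAC -mulrA ler_wpM2l ?exprn_ge0 // mulrA.
by rewrite ler_wpM2r ?invr_ge0.
Qed.

Lemma is_cvg_series_egf_coeff x t : geom_bounded x -> cvgn (series (egf_coeff x t)).
Proof.
move=> [C [c [C0 c0 xle]]]; apply: normed_cvg.
have bound_exp : (fun k => `|t| ^+ k * (C * exp_coeff c k)) = C *: exp_coeff (`|t| * c).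
  by apply/funext => k; rewrite fctE /exp_coeff /= exprMn -[C *: _]/(C * _) !mulrA [_ * C]mulrC.
apply: (@series_le_cvg _ _ (fun k => `|t| ^+ k * (C * exp_coeff c k))) => [k|k|k|].
- exact: normr_ge0.
- by rewrite !mulr_ge0 ?exprn_ge0 ?exp_coeff_ge0.
- exact: norm_egf_coeff_le.
- by rewrite bound_exp; exact/is_cvg_seriesZ/is_cvg_series_exp_coeff.
Qed.

Lemma series_exp_coeff_le_expR (c : R) N : 0 <= c -> series (exp_coeff c) N <= expR c.
Proof.
move=> c0; apply: nondecreasing_cvgn_le; last exact: is_cvg_series_exp_coeff.
by apply: nondecreasing_series => i _ _; exact: exp_coeff_ge0.
Qed.

Lemma norm_egf_sub_coeff_le x t C c k :
  0 < t <= 1 -> 0 <= C -> 0 <= c -> (forall i, `|x i| <= C * c ^+ i) ->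
  (forall i, (i < k)%N -> x i = 0) ->
  `|egf x t - egf_coeff x t k| <= t ^+ k.+1 * (C * expR c).
Proof.
move=> /andP[t0 t1] C0 c0 xle xlt.
have egf_cvg : series (egf_coeff x t) @ \oo --> egf x t.
  by apply: is_cvg_series_egf_coeff; exists C, c.
apply: (cvgr_to_le (cvg_norm (cvgB egf_cvg (cvg_cst (egf_coeff x t k))))).
exists k.+1 => // N /= ltkN.
rewrite !fctE /series /= (big_cat_nat (leq0n k) (ltnW ltkN)) /= big_nat_cond big1 ?add0r;
  last by move=> i /andP[/andP[_ lt_ik] _]; rewrite /egf_coeff xlt ?mulr0.
rewrite (big_ltn ltkN) addrC addKr; apply: le_trans (ler_norm_sum _ _ _) _.
apply: (@le_trans _ _ (\sum_(k.+1 <= i < N) t ^+ k.+1 * (C * exp_coeff c i))).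
  apply: ler_sum_nat => i /andP[lt_ki _]; apply: le_trans (norm_egf_coeff_le t (xle i)) _.
  rewrite ger0_norm ?(ltW t0) // ler_wpM2r ?mulr_ge0 ?exp_coeff_ge0 ?exprn_ge0 //.
  by rewrite ler_wiXn2l // ltW.
rewrite -!mulr_sumr ler_wpM2l ?exprn_ge0 ?(ltW t0) // ler_wpM2l //.
apply: le_trans (series_exp_coeff_le_expR N c0).
rewrite /series /= (big_cat_nat (leq0n k.+1) ltkN) lerDr.
by rewrite sumr_ge0 // => i _; rewrite exp_coeff_ge0.
Qed.

Lemma egf_coeff_eq0 x : geom_bounded x ->
  (forall d, 0 < d -> exists2 t, 0 < t < d & egf x t = 0) -> forall k, x k = 0.
Proof.
move=> [C [c [C0 c0 xle]]] roots; elim/ltn_ind => k IH.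
set Q := C * expR c * k`!%:R.
have Q0 : 0 <= Q by rewrite !mulr_ge0 ?expR_ge0.
have root_bound t : 0 < t <= 1 -> egf x t = 0 -> `|x k| <= t * Q.
  move=> t01 egf0; have /andP[t0 _] := t01.
  have := norm_egf_sub_coeff_le t01 C0 c0 xle IH.
  rewrite egf0 sub0r normrN /egf_coeff normrM ger0_norm ?exp_coeff_ge0 ?(ltW t0) //.
  rewrite /exp_coeff /= exprSr -mulrA mulrAC -mulrA ler_pM2l ?exprn_gt0 //.
  by rewrite ler_pdivrMr ?ltr0n ?fact_gt0 // /Q !mulrA.
apply/eqP; rewrite -normr_le0; apply/ler_addgt0Pr => e e0; rewrite add0r.
have Q1 : 0 < Q + 1 by rewrite ltr_wpDl.
have d0 : 0 < Num.min 1 (e / (Q + 1)) by rewrite lt_min ltr01 divr_gt0.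
have [t /andP[t0 td] egf0] := roots _ d0.
move: td; rewrite lt_min ltr_pdivlMr // => /andP[t1 te].
have t01 : 0 < t <= 1 by rewrite t0 ltW.
by have := root_bound t t01 egf0; nra.
Qed.

Lemma measurable_egf (D : set R) x : geom_bounded x -> measurable_fun D (egf x).
Proof.
move=> xb; apply: (measurable_fun_cvg (h := fun N t => series (egf_coeff x t) N)).
  move=> N; rewrite /series /=; apply: measurable_sum => k.
  by apply: measurable_funM => //; apply: measurable_funM => //; exact: exprn_measurable.
by move=> t _; exact: is_cvg_series_egf_coeff.
Qed.

End ExponentialGeneratingFunction.

Section MatrixExponential.
Context {R : realType}.

Lemma geom_bounded_markov n p l (H : 'M[R]_(p, n)) (M : 'M[R]_n) (E : 'M[R]_(n, l)) i j :
  geom_bounded (fun k => (H *m M ^+ k *m E) i j).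
Proof.
set c := \sum_a \sum_b `|M a b|.
have c0 : 0 <= c by rewrite !sumr_ge0 // => *; rewrite sumr_ge0.
exists (\sum_b \sum_a `|H i a| * `|E b j|), c; split => // [|k].
  by rewrite !sumr_ge0 // => b _; rewrite sumr_ge0 // => a _; rewrite mulr_ge0.
rewrite mxE mulr_suml; apply: le_trans (ler_norm_sum _ _ _) _; apply: ler_sum => b _.
rewrite normrM mxE.
apply: le_trans (ler_wpM2r (normr_ge0 _) (ler_norm_sum _ _ _)) _.
rewrite !mulr_suml; apply: ler_sum => a _.
rewrite normrM -!mulrA ler_wpM2l // mulrC ler_wpM2l //.
exact: norm_mxpow_entry_le.
Qed.

Lemma cvg_mulmx_entry m n q r (H : 'M[R]_(m, n)) (P_ : nat -> 'M[R]_(n, q))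
    (P : 'M[R]_(n, q)) (E : 'M[R]_(q, r)) i j :
  (forall a b, P_ N a b @[N --> \oo] --> P a b) ->
  (H *m P_ N *m E) i j @[N --> \oo] --> (H *m P *m E) i j.
Proof.
move=> cvgP; rewrite mxE; under eq_fun do rewrite mxE.
apply: cvg_big => [|b _]; first exact: add_continuous.
rewrite mxE; under eq_fun do rewrite mxE.
apply: cvgM; last exact: cvg_cst.
apply: cvg_big => [|a _]; first exact: add_continuous.
by apply: cvgM; [exact: cvg_cst | exact: cvgP].
Qed.

Lemma expm_markov_egf n p l (H : 'M[R]_(p, n)) (M : 'M[R]_n) (E : 'M[R]_(n, l)) t i j :
  (H *m expm (t *: M) *m E) i j = egf (fun k => (H *m M ^+ k *m E) i j) t.
Proof.
pose S N := \sum_(k < N) exp_coeff t k *: M ^+ k.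
have cvgS a b : S N a b @[N --> \oo] --> expm (t *: M) a b.
  have -> : (fun N => S N a b) = series (egf_coeff (fun k => (M ^+ k) a b) t).
    by apply/funext => N; rewrite summxE /series /= big_mkord; apply: eq_bigr => k _; rewrite mxE.
  have -> : expm (t *: M) a b = egf (fun k => (M ^+ k) a b) t.
    rewrite mxE /egf /egf_coeff; congr (limn (series _)); apply/funext => k.
    by rewrite mx_exprZn mxE /exp_coeff /= mulrA [_^-1 * _]mulrC.
  apply: is_cvg_series_egf_coeff.
  have := geom_bounded_markov 1%:M M 1%:M a b.
  by under eq_fun do rewrite mul1mx mulmx1.
rewrite /egf; have -> : series (egf_coeff (fun k => (H *m M ^+ k *m E) i j) t) =
    fun N => (H *m S N *m E) i j.
  apply/funext => N; rewrite mulmx_sumr mulmx_suml summxE /series /= big_mkord.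
  by apply: eq_bigr => k _; rewrite -scalemxAr -scalemxAl mxE.
by apply/esym/cvg_lim => //; exact: cvg_mulmx_entry.
Qed.

End MatrixExponential.

Lemma integral_ge0_eq0_roots (R : realType) (f : R -> \bar R) :
  measurable_fun (`[0%R, +oo[ : set R) f -> (forall t, (0 <= f t)%E) ->
  (\int[lebesgue_measure]_(t in `[0%R, +oo[) f t)%E = 0%E ->
  forall d, 0 < d -> exists2 t, 0 < t < d & f t = 0%E.
Proof.
move=> mf f0 int0 d d0.
have abs_int0 : (\int[lebesgue_measure]_(t in `[0%R, +oo[) `|f t|)%E = 0%E.
  by rewrite -int0; apply: eq_integral => t _; rewrite gee0_abs.
have [N [mN N0 sN]] := (ae_eq_integral_abs lebesgue_measure (measurable_itv _) mf).1 abs_int0.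
have : ~ (`]0, d[ `<=` N).
  move=> sub; have : lebesgue_measure (`]0, d[%classic : set R) = 0%E.
    exact: (subset_measure0 (mu := lebesgue_measure) (measurable_itv `]0, d[%R) mN sub N0).
  by rewrite lebesgue_measure_itv /= lte_fin d0 sube0 => /eqP; rewrite eqe gt_eqF.
move=> /existsNP [t /not_implyP [t0d tN]]; move: t0d; rewrite /= in_itv /= => t0d.
exists t => //; apply: contra_notP tN => ft; apply: sN => /=; apply/not_implyP; split => //.
by case/andP: t0d => t0 _; rewrite /= in_itv /= andbT ltW.
Qed.

Lemma H2norm2_eq0_markov (R : realType) n p l
    (H : 'M[R]_(p, n)) (M : 'M[R]_n) (E : 'M[R]_(n, l)) :
  H2norm2 (fun t => H *m expm (t *: M) *m E) = 0%E <->
  forall k, H *m M ^+ k *m E = 0.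
Proof.
set g := fun t => H *m expm (t *: M) *m E.
have g_egf t i j : g t i j = egf (fun k => (H *m M ^+ k *m E) i j) t.
  exact: expm_markov_egf.
rewrite /H2norm2; split => [int0 k | markov0].
- have mf : measurable_fun (`[0%R, +oo[ : set R) (fun t => (\tr ((g t)^T *m g t))%:E).
    apply/measurable_EFinP.
    have -> : (fun t => \tr ((g t)^T *m g t)) =
        (fun t => \sum_i \sum_j egf (fun k => (H *m M ^+ k *m E) j i) t ^+ 2).
      by apply/funext => t; rewrite mxtrace_mulTmx; under eq_bigr do under eq_bigr do rewrite g_egf.
    apply: measurable_sum => i; apply: measurable_sum => j; apply: measurable_funX.
    by apply: measurable_egf; exact: geom_bounded_markov.
  have tr_ge0 t : (0 <= (\tr ((g t)^T *m g t))%:E)%E by rewrite lee_fin mxtrace_mulTmx_ge0.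
  apply/matrixP => i j; rewrite [RHS]mxE.
  apply: (egf_coeff_eq0 (geom_bounded_markov H M E i j)) => d d0.
  have [t t0d /eqP] := integral_ge0_eq0_roots mf tr_ge0 int0 d0.
  by rewrite eqe mxtrace_mulTmx_eq0 => /eqP gt0; exists t => //; rewrite -g_egf gt0 mxE.
- apply: integral0_eq => t _.
  suff -> : g t = 0 by rewrite mulmx0 mxtrace0.
  apply/matrixP => i j; rewrite g_egf mxE /egf.
  have -> : egf_coeff (fun k => (H *m M ^+ k *m E) i j) t = 0.
    by apply/funext => k; rewrite /egf_coeff markov0 mxE mulr0.
  have -> : series (0 : R^nat) = cst 0 by apply/funext => N; rewrite /series /= big1.
  exact: lim_cst.
Qed.

Theorem lemma1 (R : realType) (n m l p : nat)
  (A : 'M[R]_n) (B : 'M[R]_(n, m)) (E : 'M[R]_(n, l)) (H : 'M[R]_(p, n))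
  (F : 'M[R]_(m, n)) :
  H2norm2 (impulse_resp A B E H F) = 0%E <->
  exists (k : nat) (X : 'M[R]_k) (V : 'M[R]_(n, k)),
    V *m X - B *m F *m V = A *m V /\
    (E^T <= V^T)%MS /\ (* im E ⊆ im V (column spaces) *)
    H *m V = 0.        (* im V ⊆ ker H *)
Proof.
rewrite /impulse_resp H2norm2_eq0_markov markov_eq0_invariant.
split=> [[k [X [V [VX EV HV]]]] | [k [X [V [VX [EV HV]]]]]]; exists k, X, V.
- by split; [rewrite VX mulmxDl addrK | split].
- by split=> //; rewrite mulmxDl -VX subrK.
Qed.
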